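(* Let $X$ be an infinite set with the discrete topology and let $G$ be a subgroup of the permutation group $\mathrm S(X)$ endowed with the permutation topology $\tau_\partial$. Then the Roelcke uniformity $L\wedge R$ of $G$ coincides with the uniformity $R_{\mathcal K}$, whose base consists of the coverings $\{O g\,\mathrm{St}_{x_1,\dots,x_n}\mid g\in G\}$ with $O$ a neighbourhood of the identity of $G$ and $x_1,\dots,x_n\in X$, $n\in\mathbb N$.
   Context: The permutation topology $\tau_\partial$ on $G$ is the group topology in which the pointwise stabilizers $\mathrm{St}_{x_1,\dots,x_n}=\{g\in G\mid g(x_i)=x_i\}$, $x_1,\dots,x_n\in X$, form a base of neighbourhoods of the identity. The Roelcke uniformity $L\wedge R$ is the greatest lower bound of the left and right uniformities; its base consists of the coverings $\{UgU\mid g\in G\}$, $U$ a neighbourhood of the identity. *)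

(* permutations of a type X are represented as bijective
   functions X -> X; subsets are predicates. *)
From Stdlib Require Import List.

Section Defs.
Variable X : Type.

Definition bijective (f : X -> X) : Prop :=
  exists h : X -> X, (forall x, h (f x) = x) /\ (forall x, f (h x) = x).

Definition is_perm_subgroup (G : (X -> X) -> Prop) : Prop :=
  (forall g, G g -> bijective g) /\
  G (fun x => x) /\
  (forall g h, G g -> G h -> G (fun x => g (h x))) /\
  (forall g, G g -> exists h, G h /\ (forall x, h (g x) = x) /\ (forall x, g (h x) = x)).

Definition St (G : (X -> X) -> Prop) (F : list X) : (X -> X) -> Prop :=
  fun g => G g /\ forall x, In x F -> g x = x.

Definition nbhd1 (G : (X -> X) -> Prop) (U : (X -> X) -> Prop) : Prop :=
  (forall g, U g -> G g) /\
  exists F : list X, forall g, St G F g -> U g.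

Definition dprod (A : (X -> X) -> Prop) (g : X -> X) (B : (X -> X) -> Prop)
  : (X -> X) -> Prop :=
  fun f => exists a b, A a /\ B b /\ f = (fun x => a (g (b x))).

Definition cover := ((X -> X) -> Prop) -> Prop.

Definition refines (C1 C2 : cover) : Prop :=
  forall S, C1 S -> exists T, C2 T /\ forall f, S f -> T f.

Definition roelcke_base (G : (X -> X) -> Prop) : cover -> Prop :=
  fun C => exists U, nbhd1 G U /\
    C = (fun S => exists g, G g /\ S = dprod U g U).

Definition RK_base (G : (X -> X) -> Prop) : cover -> Prop :=
  fun C => exists O F, nbhd1 G O /\
    C = (fun S => exists g, G g /\ S = dprod O g (St G F)).

(* Two bases of coverings generate the same uniformity iff every base
   covering of each is refined by some base covering of the other. *)
Definition same_uniformity (B1 B2 : cover -> Prop) : Prop :=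
  (forall C1, B1 C1 -> exists C2, B2 C2 /\ refines C2 C1) /\
  (forall C2, B2 C2 -> exists C1, B1 C1 /\ refines C1 C2).

End Defs.

(* Each stabilizer St_F is itself a neighbourhood of the identity.  Hence a
   Roelcke covering {U g U} is refined by the R_K covering {St_F g St_F}
   whenever St_F is contained in U, and an R_K covering {O g St_F} is refined
   by the Roelcke covering {U g U} with U = O ∩ St_F. *)
From Stdlib Require Import List.

Section StabilizerCoverings.
Variables (X : Type) (G : (X -> X) -> Prop).

Definition dprod_cover (A B : (X -> X) -> Prop) : cover X :=
  fun S => exists g, G g /\ S = dprod X A g B.

Lemma St_nbhd1 (F : list X) : nbhd1 X G (St X G F).
Proof.
  split.
  - intros g [Hg _]; exact Hg.
  - exists F; auto.
Qed.

Lemma nbhd1_meet_St (O : (X -> X) -> Prop) (F : list X) :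
  nbhd1 X G O -> nbhd1 X G (fun g => O g /\ St X G F g).
Proof.
  intros [_ [F0 HF0]]. split.
  - intros g [_ [Hg _]]; exact Hg.
  - exists (F0 ++ F). intros g [Hg Hfix]. split.
    + apply HF0. split; auto. intros x Hx. apply Hfix, in_or_app; auto.
    + split; auto. intros x Hx. apply Hfix, in_or_app; auto.
Qed.

Lemma dprod_sub (A A' B B' : (X -> X) -> Prop) (g : X -> X) :
  (forall a, A a -> A' a) -> (forall b, B b -> B' b) ->
  forall f, dprod X A g B f -> dprod X A' g B' f.
Proof.
  intros HA HB f [a [b [Ha [Hb Hf]]]]. exists a, b. auto.
Qed.

Lemma refines_dprod_cover (A A' B B' : (X -> X) -> Prop) :
  (forall a, A a -> A' a) -> (forall b, B b -> B' b) ->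
  refines X (dprod_cover A B) (dprod_cover A' B').
Proof.
  intros HA HB S [g [Hg ->]].
  exists (dprod X A' g B'). split.
  - exists g; auto.
  - apply dprod_sub; assumption.
Qed.

End StabilizerCoverings.

Theorem proposition3p0 (X : Type)
  (Xinf : ~ exists l : list X, forall x : X, In x l)
  (G : (X -> X) -> Prop) (HG : is_perm_subgroup X G) :
  same_uniformity X (roelcke_base X G) (RK_base X G).
Proof.
  split.
  - intros C [U [[_ [F HF]] ->]].
    exists (dprod_cover X G (St X G F) (St X G F)). split.
    + exists (St X G F), F. split; [apply St_nbhd1 | reflexivity].
    + apply refines_dprod_cover; exact HF.
  - intros C [O [F [HO ->]]].
    exists (dprod_cover X G (fun g => O g /\ St X G F g)
                             (fun g => O g /\ St X G F g)). split.
    + exists (fun g => O g /\ St X G F g).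
      split; [apply nbhd1_meet_St; exact HO | reflexivity].
    + apply refines_dprod_cover.
      * intros a [Ha _]; exact Ha.
      * intros b [_ Hb]; exact Hb.
Qed.
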